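(* Let $G$ be a connected graph and let $P$ and $Q$ be two distinct pendent paths in $G$ with origins $u$ and $v$, respectively (possibly $u=v$). Let $x$ be the neighbor of $u$ lying on $P$, and let $y$ be the pendent (degree-one) end vertex of $Q$. Let $G' = G - ux + xy$ (delete the edge $ux$ and add the edge $xy$). Then $SO(G) > SO(G')$.
   Context: For a graph $G$, $d_G(w)$ denotes the degree of vertex $w$, and the Sombor index is $SO(G)=\sum_{ab\in E(G)}\sqrt{d_G(a)^2+d_G(b)^2}$. A pendent path in $G$ is a path $P=u u_1 u_2\cdots u_k$ ($k\ge 1$) in $G$ such that $d_G(u)\ge 3$, $d_G(u_k)=1$ and $d_G(u_i)=2$ for $i=1,\dots,k-1$; the vertex $u$ is its origin and $k$ its length. For an edge $e$, $G-e$ denotes deletion of $e$; for nonadjacent vertices $a,b$, $G+ab$ denotes adding the edge $ab$. *)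

(* Simple graphs on a finType V as symmetric irreflexive rel V. *)
From mathcomp Require Import all_boot all_order all_algebra.
Set Implicit Arguments. Unset Strict Implicit. Unset Printing Implicit Defensive.
Import Order.TTheory GRing.Theory Num.Theory.

Definition deg (V : finType) (e : rel V) (w : V) : nat := #|[pred z | e w z]|.

Definition connected (V : finType) (e : rel V) : Prop := forall a b : V, connect e a b.

(* Sombor index: sum over unordered edges {a,b}, each counted once
   (ordered by enum_rank a < enum_rank b). *)
Definition SO (R : rcfType) (V : finType) (e : rel V) : R :=
  (\sum_(a : V) \sum_(b : V | e a b && (enum_rank a < enum_rank b)%N)
     Num.sqrt ((deg e a)%:R ^+ 2 + (deg e b)%:R ^+ 2))%R.

(* pendent_path e u s : the vertex sequence u :: s = [u; u1; ...; uk] is a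
   pendent path with origin u: k >= 1, it is a path (distinct vertices,
   consecutive ones adjacent), deg u >= 3, deg uk = 1, deg ui = 2 for 1 <= i <= k-1. *)
Definition pendent_path (V : finType) (e : rel V) (u : V) (s : seq V) : bool :=
  [&& s != [::], path e u s, uniq (u :: s), (3 <= deg e u)%N,
      deg e (last u s) == 1%N &
      all (fun w => deg e w == 2%N) (take (size s).-1 s)].

Definition del_edge (V : finType) (e : rel V) (a b : V) : rel V :=
  fun s t => e s t && ~~ (((s == a) && (t == b)) || ((s == b) && (t == a))).

Definition add_edge (V : finType) (e : rel V) (a b : V) : rel V :=
  fun s t => [|| e s t, (s == a) && (t == b) | (s == b) && (t == a)].

From mathcomp Require Import all_boot all_order all_algebra.
From mathcomp Require Import lra.
Import Order.TTheory GRing.Theory Num.Theory.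

(* Let P = u x ... and Q = v ... w y be distinct pendent paths and
   G' = G - ux + xy.  Only three degrees can change: u loses the neighbour
   x, x trades u for y, and the leaf y gets degree 2.  Twice the Sombor
   index is the sum of the edge weights sqrt(d(a)^2 + d(b)^2) over ordered
   pairs (a, b), so 2 (SO(G) - SO(G')) is the sum of the pairwise weight
   differences D(a, b).  D is nonnegative except possibly on the pairs {x,y}
   and {y,w}, the only ones involving a vertex whose degree grows; splitting
   off the pairs {u,x}, {x,y}, {y,w} leaves a nonnegative rest, and a
   square-root estimate gives D(u,x) + D(x,y) + D(y,w) > 0 from d(u) >= 3,
   d(x) <= 2 and d(w) >= 2.  The side conditions x <> y and w <> x come
   from the distinctness of P and Q, since a pendent path is determined by
   its end vertex. *)

Lemma edge_neq {V : finType} {e : rel V} {a b : V} :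
  irreflexive e -> e a b -> a != b.
Proof. by move=> e_irr; apply: contraTneq => ->; rewrite e_irr. Qed.

Section PendentPaths.
Context {V : finType} {e : rel V}.
Hypothesis e_sym : symmetric e.

Lemma deg1_neighbor_uniq {c a b : V} : deg e c = 1%N -> e c a -> e c b -> a = b.
Proof.
move=> c1 ca cb; have : (#|[pred t | e c t]| <= 1)%N by rewrite -/(deg e c) c1.
by move/card_le1_eqP; apply; rewrite inE.
Qed.

Lemma deg2_other_neighbor_uniq {c p a b : V} : (deg e c <= 2)%N ->
  e c p -> e c a -> e c b -> a != p -> b != p -> a = b.
Proof.
move=> c2 cp ca cb ap bp; apply/eqP; apply: contraTT c2 => ab; rewrite -ltnNge.
by apply/card_gt2P; exists p, a, b; rewrite !inE eq_sym ap ab bp.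
Qed.

Lemma pendent_path_rcons u P0 l : pendent_path e u (rcons P0 l) =
  [&& path e u (rcons P0 l), uniq (u :: rcons P0 l), (3 <= deg e u)%N,
      deg e l == 1%N & all (fun w => deg e w == 2%N) P0].
Proof.
rewrite /pendent_path -size_eq0 size_rcons last_rcons /=.
by rewrite -cats1 take_size_cat // cats1.
Qed.

Lemma pendent_path_origin_deg {u P} : pendent_path e u P -> (3 <= deg e u)%N.
Proof. by case/and5P. Qed.

Lemma pendent_path_end_deg {u P} : pendent_path e u P -> deg e (last u P) = 1%N.
Proof. by case/and5P=> _ _ _ _ /andP[/eqP]. Qed.

(* Starting from c, a walk through vertices of degree two that stops at the
   first vertex of degree at least three is determined by c, provided c has
   at most one neighbour outside the forbidden list pre. *)
Lemma degree2_walk_uniq (pre : seq V) c s z t z' :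
  (forall a b, e c a -> e c b -> a \notin pre -> b \notin pre -> a = b) ->
  path e c (rcons s z) -> path e c (rcons t z') ->
  uniq (c :: rcons s z) -> uniq (c :: rcons t z') ->
  head z s \notin pre -> head z' t \notin pre ->
  all (fun w => deg e w == 2%N) s -> all (fun w => deg e w == 2%N) t ->
  (3 <= deg e z)%N -> (3 <= deg e z')%N -> rcons s z = rcons t z'.
Proof.
elim: s pre c t => [|a s IH] pre c [|b t] c_step /=.
- by move=> /andP[cz _] /andP[cz' _] _ _ zN z'N _ _ _ _; rewrite (c_step z z').
- move=> /andP[cz _] /andP[cb _] _ _ zN bN _ /andP[/eqP b2 _] z3 _.
  by move: z3; rewrite (c_step z b) // b2.
- move=> /andP[ca _] /andP[cz' _] _ _ aN z'N /andP[/eqP a2 _] _ _ z'3.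
  by move: z'3; rewrite (c_step z' a) // a2.
move=> /andP[ca s_path] /andP[cb t_path] s_uniq t_uniq aN bN.
move=> /andP[/eqP a2 s_deg] /andP[_ t_deg] z3 z'3.
have ab := c_step a b ca cb aN bN; subst b; congr (a :: _).
move: s_uniq t_uniq => /andP[cNs s_uniq] /andP[cNt t_uniq].
have head_mem (w : V) r : head w r \in a :: rcons r w.
  by rewrite inE; case: r => [|? ?]; rewrite mem_head orbT.
apply: (IH [:: c] a) => //; rewrite ?inE.
- move=> p q ap aq; rewrite !inE => pc qc.
  by apply: (deg2_other_neighbor_uniq (c := a) (p := c)); rewrite ?a2 // e_sym.
- by apply: contra cNs => /eqP <-; apply: head_mem.
by apply: contra cNt => /eqP <-; apply: head_mem.
Qed.

(* A pendent path is determined by its end vertex: walking back from the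
   end, every step is forced until the first vertex of degree at least 3. *)
Lemma pendent_path_end_uniq {u P v Q} :
  pendent_path e u P -> pendent_path e v Q -> last u P = last v Q ->
  u :: P = v :: Q.
Proof.
case/lastP: P => [|P l]; first by case/and5P.
case/lastP: Q => [|Q l']; first by move=> _; case/and5P.
rewrite !pendent_path_rcons !last_rcons => /and5P[pathP uniqP u3 /eqP l1 degP].
move=> /and5P[pathQ uniqQ v3 _ degQ] ll'; subst l'.
have rev_walk w (S : seq V) : path e w (rcons S l) ->
    path e l (rcons (rev S) w).
  have := rev_path e w (rcons S l); rewrite last_rcons belast_rcons rev_cons.
  by move=> ->; apply: sub_path => a b; rewrite /= e_sym.
suff /(congr1 rev) : rcons (rev P) u = rcons (rev Q) v.
  by rewrite !rev_rcons !revK -!rcons_cons => ->.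
apply: (@degree2_walk_uniq [::] l) => //; rewrite ?rev_walk ?all_rev //.
- by move=> a b la lb _ _; apply: (deg1_neighbor_uniq l1).
- by rewrite -rev_cons -rev_rcons rev_uniq.
by rewrite -rev_cons -rev_rcons rev_uniq.
Qed.

Lemma pendent_path_mem_deg {u P z} : pendent_path e u P -> z \in P ->
  deg e z = 2%N \/ (z = last u P /\ deg e z = 1%N).
Proof.
case/lastP: P => [|P l]; first by case/and5P.
rewrite pendent_path_rcons last_rcons mem_rcons inE.
move=> /and5P[_ _ _ /eqP l1 /allP degP] /orP[/eqP->|zP]; first by right.
by left; apply/eqP/degP.
Qed.

Lemma pendent_path_first_edge {u P} : pendent_path e u P -> e u (head u P).
Proof. by case: P => [|a P] /and5P[] //= _ /andP[]. Qed.

Lemma pendent_path_last_edge {v Q y} : pendent_path e v (rcons Q y) ->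
  e (last v Q) y /\ (2 <= deg e (last v Q))%N.
Proof.
rewrite pendent_path_rcons rcons_path => /and5P[/andP[_ wy] _ v3 _ degQ].
split=> //; case/lastP: Q degQ {wy} => [|Q w] /=; first by move=> _; apply: ltnW.
by rewrite last_rcons all_rcons => /andP[/eqP-> _].
Qed.

Lemma pendent_path_through {u P y} : pendent_path e u P ->
  deg e (head u P) = 2%N -> e (head u P) y -> y != u -> deg e y = 1%N ->
  last u P = y.
Proof.
case: P => [|x P] pathP; first by case/and5P: pathP.
rewrite /= => x2 xy yNu y1.
case/and5P: (pathP) => _ /= /andP[ux pathxP] /andP[uNxP _] _ /andP[lastP1 _].
case: P pathP pathxP uNxP lastP1 => [|a P] pathP /=; first by rewrite x2.
rewrite !inE !negb_or => /andP[xa _] /and3P[_ aNu _] _.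
have ay : a = y.
  have xu : e x u by rewrite e_sym.
  by apply: (deg2_other_neighbor_uniq (c := x) (p := u)); rewrite ?x2 // eq_sym.
have y_in : y \in x :: a :: P by rewrite -ay !inE eqxx orbT.
by case: (pendent_path_mem_deg pathP y_in) => [|[] //]; rewrite y1.
Qed.

Lemma pendent_path_head_deg {u P} : pendent_path e u P ->
  deg e (head u P) = 2%N \/ (head u P = last u P /\ deg e (head u P) = 1%N).
Proof.
move=> pathP; apply: (pendent_path_mem_deg pathP).
have /and5P[P_ne0 _ _ _ _] := pathP.
by case: P P_ne0 {pathP} => // a P; rewrite mem_head.
Qed.

(* Two distinct pendent paths P = u x ... and Q = v ... w y: the vertex x
   is neither the leaf y nor its neighbour w, for otherwise P would also
   end at y and hence coincide with Q. *)
Lemma distinct_pendent_paths {u P v Q y} :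
  pendent_path e u P -> pendent_path e v (rcons Q y) ->
  u :: P != v :: rcons Q y -> head u P != y /\ last v Q != head u P.
Proof.
move=> pathP pathQ PNQ; have [_ w_deg] := pendent_path_last_edge pathQ.
have u_deg := pendent_path_origin_deg pathP.
have := pendent_path_end_deg pathQ; rewrite last_rcons => y_deg.
have x_deg := pendent_path_head_deg pathP.
have distinct_ends : last u P != y.
  apply: contra PNQ => /eqP endP.
  by rewrite (pendent_path_end_uniq pathP pathQ) ?last_rcons.
split; apply: contraNneq distinct_ends.
  by move=> xy; case: x_deg => [|[<- //]]; rewrite xy y_deg.
move=> wx; apply/eqP; apply: (pendent_path_through pathP) => //.
- by case: x_deg => [//|[_ x1]]; move: w_deg; rewrite wx x1.
- by rewrite -wx; case: (pendent_path_last_edge pathQ).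
by apply: contraTneq u_deg => <-; rewrite y_deg.
Qed.
End PendentPaths.

Section EdgeMove.
Context {V : finType} {e : rel V} {u x y : V}.
Hypotheses (e_sym : symmetric e) (e_irr : irreflexive e) (e_ux : e u x)
  (xy_nonedge : ~~ e x y) (uNy : u != y) (xNy : x != y).

Local Notation e' := (add_edge (del_edge e u x) x y).

Let uNx : u != x := edge_neq e_irr e_ux.

Lemma moved_sym : symmetric e'.
Proof.
move=> s t; rewrite /add_edge /del_edge e_sym.
by case: (s == u); case: (t == u); case: (s == x); case: (t == x);
  case: (s == y); case: (t == y); rewrite ?orbF ?orbT ?andbF.
Qed.

Lemma moved_irr : irreflexive e'.
Proof.
move=> s; rewrite /add_edge /del_edge e_irr /=.
by case: (eqVneq s x) => [->|]; rewrite ?(negbTE xNy) ?andbF.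
Qed.

Lemma deg_moved_origin : deg e u = (deg e' u).+1.
Proof.
rewrite /deg (cardD1 x) inE e_ux add1n; congr _.+1; apply: eq_card => t.
rewrite !inE /add_edge /del_edge eqxx (negbTE uNx) (negbTE uNy) /=.
by rewrite !orbF andbC.
Qed.

Lemma deg_moved_x : deg e' x = deg e x.
Proof.
rewrite /deg [RHS](cardD1 u) [LHS](cardD1 y) !inE e_sym e_ux.
rewrite /add_edge /del_edge !eqxx /= orbT; congr (_ + _).
apply: eq_card => t; rewrite !inE (eq_sym x u) (negbTE uNx) (negbTE xNy) /=.
case: (eqVneq t y) => [->|ty] /=; first by rewrite (negbTE xy_nonedge) andbF.
by rewrite orbF andbC.
Qed.

Lemma deg_moved_leaf : deg e y = 1%N -> deg e' y = 2.
Proof.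
move=> y1; rewrite /deg (cardD1 x) !inE /add_edge /del_edge !eqxx /= !orbT.
rewrite -y1 /deg add1n; congr _.+1; apply: eq_card => t.
rewrite !inE (eq_sym y u) (negbTE uNy) (eq_sym y x) (negbTE xNy) /=.
case: (eqVneq t x) => [->|tx] /=; first by rewrite e_sym (negbTE xy_nonedge).
by rewrite orbF andbT.
Qed.

Lemma deg_moved_other z : z != u -> z != x -> z != y -> deg e' z = deg e z.
Proof.
move=> zu zx zy; apply: eq_card => t.
by rewrite !inE /add_edge /del_edge (negbTE zu) (negbTE zx) (negbTE zy) /=
  !orbF andbT.
Qed.

Lemma deg_moved_le z : z != y -> (deg e' z <= deg e z)%N.
Proof.
move=> zy; case: (eqVneq z u) => [->|zu]; first by rewrite deg_moved_origin.
case: (eqVneq z x) => [->|zx]; first by rewrite deg_moved_x.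
by rewrite deg_moved_other.
Qed.
End EdgeMove.

Local Open Scope ring_scope.

Definition sombor_term (R : rcfType) {V : finType} (f : rel V) (a b : V) : R :=
  if f a b then Num.sqrt ((deg f a)%:R ^+ 2 + (deg f b)%:R ^+ 2) else 0.

Definition upair {V : eqType} (p q a b : V) : bool :=
  ((a == p) && (b == q)) || ((a == q) && (b == p)).

Definition drop_upair {R : rcfType} {V : eqType} (p q : V) (D : V -> V -> R)
    (a b : V) : R :=
  if upair p q a b then 0 else D a b.

Section DoubleSums.
Context {R : rcfType} {V : finType}.

Lemma upair_sym (p q a b : V) : upair p q a b = upair p q b a.
Proof. by rewrite /upair orbC !(andbC (a == _)). Qed.

Lemma sum_ordered_pairs (D : V -> V -> R) :
  (forall a b, D a b = D b a) -> (forall a, D a a = 0) ->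
  (\sum_a \sum_b (if (enum_rank a < enum_rank b)%N then D a b else 0)) *+ 2
   = \sum_a \sum_b D a b.
Proof.
move=> D_sym D_diag; rewrite mulr2n.
have -> : \sum_a \sum_b D a b =
    \sum_a \sum_b ((if (enum_rank a < enum_rank b)%N then D a b else 0)
                 + (if (enum_rank b < enum_rank a)%N then D b a else 0)).
  apply: eq_bigr => a _; apply: eq_bigr => b _.
  case: (ltngtP (enum_rank a) (enum_rank b)) => [_|_|/val_inj/enum_rank_inj ->].
  - by rewrite addr0.
  - by rewrite add0r D_sym.
  - by rewrite D_diag addr0.
under [RHS]eq_bigr => a _ do rewrite big_split.
by rewrite big_split /=; congr (_ + _); apply: exchange_big.
Qed.

Lemma sombor_term_sym (f : rel V) a b : symmetric f ->
  sombor_term R f a b = sombor_term R f b a.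
Proof. by move=> f_sym; rewrite /sombor_term f_sym addrC. Qed.

Lemma SO_double (f : rel V) : symmetric f -> irreflexive f ->
  SO R f *+ 2 = \sum_a \sum_b sombor_term R f a b.
Proof.
move=> f_sym f_irr; rewrite -sum_ordered_pairs => [|a b|a]; last 2 first.
- exact: sombor_term_sym.
- by rewrite /sombor_term f_irr.
congr (_ *+ 2); apply: eq_bigr => a _; rewrite big_mkcond.
by apply: eq_bigr => b _; rewrite /sombor_term; case: (f a b); case: ifP.
Qed.

Lemma sum_upair {p q : V} (c : R) : p != q ->
  \sum_a \sum_b (if upair p q a b then c else 0) = c *+ 2.
Proof.
move=> pNq; have sum_at z : \sum_(b : V) (if b == z then c else 0) = c.
  by rewrite -big_mkcond big_pred1_eq.
rewrite (eq_bigr (fun a =>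
  (if a == p then c else 0) + (if a == q then c else 0))).
  by rewrite big_split /= !sum_at mulr2n.
move=> a _; rewrite /upair; case: (eqVneq a p) => [->|aNp].
  rewrite (negbTE pNq) addr0 -[RHS](sum_at q).
  by apply: eq_bigr => b _; rewrite orbF.
case: (eqVneq a q) => [_|aNq]; last by rewrite addr0 big1.
by rewrite add0r -[RHS](sum_at p); apply: eq_bigr.
Qed.

Lemma sum_drop_upair {D : V -> V -> R} {p q : V} :
  (forall a b, D a b = D b a) -> p != q ->
  \sum_a \sum_b D a b = D p q *+ 2 + \sum_a \sum_b drop_upair p q D a b.
Proof.
move=> D_sym pNq; rewrite -(sum_upair (D p q) pNq) -big_split /=.
apply: eq_bigr => a _; rewrite -big_split; apply: eq_bigr => b _ /=.
rewrite /drop_upair; case: ifP => [|_]; last by rewrite add0r.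
by rewrite addr0 /upair => /orP[]/andP[/eqP-> /eqP->]; rewrite // D_sym.
Qed.

Lemma drop_upair_other (D : V -> V -> R) (p q a b : V) :
  ~~ upair p q a b -> drop_upair p q D a b = D a b.
Proof. by rewrite /drop_upair => /negbTE->. Qed.

Lemma drop_upair_sym (p q : V) {D : V -> V -> R} :
  (forall a b, D a b = D b a) ->
  forall a b, drop_upair p q D a b = drop_upair p q D b a.
Proof. by move=> D_sym a b; rewrite /drop_upair upair_sym D_sym. Qed.
End DoubleSums.

(* When a leaf adjacent to a vertex of degree t >= 2 gets degree 2, the
   weight of its edge grows by at most 3/4. *)
Lemma sqrt_leaf_gap {R : rcfType} {t : R} : 2 <= t ->
  Num.sqrt (2 ^+ 2 + t ^+ 2) - Num.sqrt (1 + t ^+ 2) <= 3 / 4.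
Proof.
move=> t2; set E := Num.sqrt _; set C := Num.sqrt _.
have E0 : 0 <= E := sqrtr_ge0 _; have C0 : 0 <= C := sqrtr_ge0 _.
have E_sq : E ^+ 2 = 2 ^+ 2 + t ^+ 2 by rewrite sqr_sqrtr //; nra.
have C_sq : C ^+ 2 = 1 + t ^+ 2 by rewrite sqr_sqrtr //; nra.
have C2 : 2 <= C by nra.
have gap_times_sum : (E - C) * (E + C) = 3 by nra.
nra.
Qed.

(* The weight of an edge between degrees d >= 3 and a <= 2 exceeds the
   weight of an edge between degrees a and 2 by more than 3/4. *)
Lemma sqrt_origin_gap {R : rcfType} {d a : R} : 3 <= d -> 0 <= a <= 2 ->
  Num.sqrt (a ^+ 2 + 2 ^+ 2) + 3 / 4 < Num.sqrt (d ^+ 2 + a ^+ 2).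
Proof.
move=> d3 /andP[a0 a2]; set r := Num.sqrt _; set s := Num.sqrt _.
have r0 : 0 <= r := sqrtr_ge0 _; have s0 : 0 <= s := sqrtr_ge0 _.
have r_sq : r ^+ 2 = a ^+ 2 + 2 ^+ 2 by rewrite sqr_sqrtr //; nra.
have s_sq : s ^+ 2 = d ^+ 2 + a ^+ 2 by rewrite sqr_sqrtr //; nra.
rewrite ltNge; apply/negP => s_le.
have s_sq_le : s ^+ 2 <= (r + 3 / 4) ^+ 2 by nra.
have r_large : 71 / 24 <= r by nra.
nra.
Qed.

Section SomborDecrease.
Context {R : rcfType} {V : finType} {e : rel V} {u x y w : V}.
Hypotheses (e_sym : symmetric e) (e_irr : irreflexive e)
  (e_ux : e u x) (e_wy : e w y) (u_deg : (3 <= deg e u)%N)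
  (x_deg : (deg e x <= 2)%N) (y_deg : deg e y = 1%N) (w_deg : (2 <= deg e w)%N)
  (xNy : x != y) (wNx : w != x).

Local Notation e' := (add_edge (del_edge e u x) x y).
Local Notation D := (fun a b => sombor_term R e a b - sombor_term R e' a b).

Let y_leaf b : e y b -> b = w.
Proof. by move=> yb; apply: (deg1_neighbor_uniq y_deg) => //; rewrite e_sym. Qed.

Let xy_nonedge : ~~ e x y.
Proof. by apply: contra wNx; rewrite e_sym => /y_leaf ->. Qed.

Let uNy : u != y. Proof. by apply: contraTneq u_deg => ->; rewrite y_deg. Qed.
Let uNx : u != x := edge_neq e_irr e_ux.
Let yNw : y != w. Proof. by rewrite eq_sym (edge_neq e_irr e_wy). Qed.

Lemma sombor_term_moved_le a b : ~~ upair x y a b -> ~~ upair y w a b ->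
  sombor_term R e' a b <= sombor_term R e a b.
Proof.
rewrite /sombor_term /add_edge /del_edge -/(upair x y a b) => /negbTE-> yw_ab.
case e_ab: (e a b); last by rewrite lexx.
rewrite andTb orbF; case: ifP => _; last exact: sqrtr_ge0.
have aNy : a != y.
  by apply: contra yw_ab => /eqP ay; rewrite /upair ay (y_leaf b) -?ay ?eqxx.
have bNy : b != y.
  apply: contra yw_ab => /eqP by_.
  by rewrite /upair by_ (y_leaf a) ?eqxx ?orbT // e_sym -by_.
rewrite ler_sqrt; last by rewrite addr_ge0 ?sqr_ge0.
rewrite -!natrX -!natrD ler_nat leq_add // leq_sqr; exact: deg_moved_le.
Qed.

(* The removed edge ux, the added edge xy and the leaf edge yw together
   lose weight; the case w = u is the one where u is also the neighbour
   of y. *)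
Lemma moved_pairs_gain : 0 < D u x + D x y + D y w.
Proof.
have e'_ux : e' u x = false.
  by rewrite /add_edge /del_edge !eqxx (negbTE uNx) (negbTE uNy) /= andbF.
have e'_xy : e' x y by rewrite /add_edge !eqxx orbT.
have e'_yw : e' y w.
  rewrite /add_edge /del_edge e_sym e_wy (eq_sym y u) (eq_sym y x).
  by rewrite (negbTE uNy) (negbTE xNy).
rewrite /sombor_term e_ux e'_ux (negbTE xy_nonedge) e'_xy e_sym e_wy e'_yw.
rewrite deg_moved_x // deg_moved_leaf // y_deg subr0 sub0r.
have x_deg' : 0 <= ((deg e x)%:R : R) <= 2 by rewrite ler0n ler_nat.
have u_deg' : 3 <= (deg e u)%:R :> R by rewrite ler_nat.
have origin_gap := sqrt_origin_gap u_deg' x_deg'.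
case: (eqVneq w u) => [->|wNu].
  have du : deg e u = (deg e' u).+1 by apply: deg_moved_origin.
  have d2 : 2 <= (deg e' u)%:R :> R by rewrite ler_nat -ltnS -du.
  rewrite du -[(deg e' u).+1%:R]natr1 in origin_gap *.
  set d := (deg e' u)%:R in d2 origin_gap *.
  have leaf_gap : Num.sqrt (2 ^+ 2 + d ^+ 2) <= Num.sqrt (1 + (d + 1) ^+ 2).
    by rewrite ler_sqrt ?addr_ge0 ?sqr_ge0 //; nra.
  by rewrite expr1n; lra.
rewrite deg_moved_other // ?(eq_sym w y) //.
have w_deg' : 2 <= (deg e w)%:R :> R by rewrite ler_nat.
have leaf_gap := sqrt_leaf_gap w_deg'.
by rewrite expr1n; lra.
Qed.

Theorem sombor_move_decreases : SO R e' < SO R e.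
Proof.
have e'_sym : symmetric e' by apply: moved_sym.
have e'_irr : irreflexive e' by apply: moved_irr.
have D_sym a b : D a b = D b a.
  by rewrite sombor_term_sym // [sombor_term R e' a b]sombor_term_sym.
have double_gap : (SO R e - SO R e') *+ 2 = \sum_a \sum_b D a b.
  rewrite mulrnBl !SO_double // -sumrB.
  by apply: eq_bigr => a _; rewrite sumrB.
have D1_sym := drop_upair_sym u x D_sym; have D2_sym := drop_upair_sym x y D1_sym.
rewrite (sum_drop_upair D_sym uNx) (sum_drop_upair D1_sym xNy)
  (sum_drop_upair D2_sym yNw) in double_gap.
have distinct_pairs : [&& ~~ upair u x x y, ~~ upair u x y w & ~~ upair x y y w].
  by rewrite /upair ?(eq_sym x u) ?(eq_sym y u) ?(eq_sym y x) (negbTE uNx)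
    (negbTE uNy) (negbTE xNy) (negbTE wNx) !andbF.
case/and3P: distinct_pairs => ux_xy ux_yw xy_yw.
rewrite !drop_upair_other // in double_gap.
set rest := \sum_a _ in double_gap.
have rest_ge0 : 0 <= rest.
  apply: sumr_ge0 => a _; apply: sumr_ge0 => b _; rewrite /drop_upair.
  case: ifP => // yw_ab; case: ifP => // xy_ab; case: ifP => // _.
  by rewrite subr_ge0 sombor_term_moved_le ?xy_ab ?yw_ab.
have gain := moved_pairs_gain.
rewrite -subr_gt0; move: double_gap; rewrite !mulr2n; lra.
Qed.
End SomborDecrease.

Theorem lemma2p1 (R : rcfType) (V : finType) (e : rel V)
    (u v x y : V) (P Q : seq V) :
  symmetric e -> irreflexive e -> connected e ->
  pendent_path e u P -> pendent_path e v Q ->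
  (u :: P) != (v :: Q) ->
  x = head u P -> y = last v Q ->
  (SO R (add_edge (del_edge e u x) x y) < SO R e)%R.
Proof.
move=> e_sym e_irr _ pathP pathQ PNQ ->{x} ->{y}.
case/lastP: Q pathQ PNQ => [|Q y] pathQ PNQ; first by case/and5P: pathQ.
have [e_wy w_deg] := pendent_path_last_edge pathQ.
have [xNy wNx] := distinct_pendent_paths e_sym pathP pathQ PNQ.
have u_deg := pendent_path_origin_deg pathP.
have := pendent_path_end_deg pathQ; rewrite last_rcons => y_deg.
have x_deg : (deg e (head u P) <= 2)%N.
  by case: (pendent_path_head_deg pathP) => [->|[_ ->]].
apply: (sombor_move_decreases (w := last v Q)) => //.
exact: pendent_path_first_edge.
Qed.
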